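(* Assume $|\mathcal S|\ge2$, let $\epsilon,\delta>0$, let $\mathcal V_j\in\mathcal S$, and set $$r^b_{max}=\frac{\epsilon\delta}{\max_{\mathcal V_i\in\mathcal S\setminus\{\mathcal V_j\}}\frac{1}{|F(\mathcal V_i)|}\sum_{v_s\in F(\mathcal V_i)}d(v_s)}.$$ Then GBP$(G,\mathcal S,\mathcal V_j,r^b_{max})$ terminates, and its output $\hat\pi_d(\mathcal V_i,\mathcal V_j)$ is an $(\epsilon,\delta)$-approximation of $\pi_d(\mathcal V_i,\mathcal V_j)$ for every $\mathcal V_i\in\mathcal S$ with $\mathcal V_i\ne\mathcal V_j$.
   Context: $G=(V,E)$ is a directed graph with $n$ nodes and $m$ edges, no self-loops, and every node of out-degree $d(v)\ge1$; $\alpha\in(0,1)$. PPR $\pi(u,v)$: probability that a random walk from $u$ which at each step stops with probability $\alpha$ and otherwise moves to a uniformly random out-neighbor stops at $v$; $\pi_d(u,v)=d(u)\pi(u,v)$. A collection $\mathcal S=\{\mathcal V_1,\dots,\mathcal V_k\}$ of supernodes is given, each $\mathcal V_i$ having a nonempty leaf set $F(\mathcal V_i)\subseteq V$, the leaf sets being pairwise disjoint. For supernodes, $\pi_d(\mathcal V_i,\mathcal V_j)=\frac{1}{|F(\mathcal V_i)||F(\mathcal V_j)|}\sum_{v_s\in F(\mathcal V_i),v_t\in F(\mathcal V_j)}\pi_d(v_s,v_t)$. A value $\hat x$ is an $(\epsilon,\delta)$-approximation of $x\ge0$ if $|\hat x-x|\le\epsilon\delta$ when $x<\delta$, and $|\hat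 x-x|\le\epsilon x$ when $x\ge\delta$. Procedure GBP$(G,\mathcal S,\mathcal V_j,r^b_{max})$: set $\hat\pi_d(\mathcal V_i,\mathcal V_j)=0$ for all $\mathcal V_i\in\mathcal S$; set $r(v,\mathcal V_j)=1/|F(\mathcal V_j)|$ for $v\in F(\mathcal V_j)$ and $0$ otherwise. While some $v_k\in V$ has $r(v_k,\mathcal V_j)>r^b_{max}$, pick any such $v_k$ and: if $v_k\in F(\mathcal V_i)$ for some $\mathcal V_i\in\mathcal S$, add $\alpha\,d(v_k)\,r(v_k,\mathcal V_j)/|F(\mathcal V_i)|$ to $\hat\pi_d(\mathcal V_i,\mathcal V_j)$; for each in-neighbor $v_i$ of $v_k$ add $(1-\alpha)\,r(v_k,\mathcal V_j)/d(v_i)$ to $r(v_i,\mathcal V_j)$; then set $r(v_k,\mathcal V_j)=0$. Output the values $\hat\pi_d(\cdot,\mathcal V_j)$. *)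

From HB Require Import structures.
From mathcomp Require Import all_boot all_order all_algebra.
From mathcomp Require Import all_classical all_reals all_analysis.
From Stdlib Require Import Relation_Operators.
Set Implicit Arguments. Unset Strict Implicit. Unset Printing Implicit Defensive.
Import Order.TTheory GRing.Theory Num.Theory.
Local Open Scope ring_scope.

Section GBP.
Variables (R : realType) (V : finType) (e : rel V) (alpha : R).
(* e u v  <=>  directed edge u -> v *)

Definition outdeg (v : V) : nat := #|[set w | e v w]|.

Fixpoint walkprob (k : nat) (u v : V) : R :=
  match k with
  | 0 => (u == v)%:R
  | k'.+1 => \sum_(w | e u w) walkprob k' w v / (outdeg u)%:R
  end.

(* PPR: pi(u,v) = sum_{k>=0} alpha (1-alpha)^k P^k(u,v), the probability that the
   alpha-terminating walk from u stops at v (stops after exactly k moves w.p.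
   alpha (1-alpha)^k) *)
Definition ppr (u v : V) : R :=
  limn (fun n => \sum_(k < n) alpha * (1 - alpha) ^+ k * walkprob k u v).

Definition pprd (u v : V) : R := (outdeg u)%:R * ppr u v.

Variables (I : finType) (F : I -> {set V}).

Definition pprd_super (i j : I) : R :=
  (#|F i|%:R * #|F j|%:R)^-1 *
  \sum_(vs in F i) \sum_(vt in F j) pprd vs vt.

Definition eps_delta_approx (eps delta xhat x : R) : Prop :=
  (x < delta -> `|xhat - x| <= eps * delta) /\
  (delta <= x -> `|xhat - x| <= eps * x).

(* state of GBP: (pihat(. , V_j), r(. , V_j)) *)
Record gbp_state := GBPState { pihat : I -> R; resid : V -> R }.

Definition gbp_init (j : I) : gbp_state :=
  GBPState (fun _ => 0)
           (fun v => if v \in F j then (#|F j|%:R)^-1 else 0).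

(* one push operation at vk (leaf sets are disjoint, so at most one i has vk in F i) *)
Definition gbp_push (s : gbp_state) (vk : V) : gbp_state :=
  GBPState
    (fun i => pihat s i +
       (if vk \in F i then alpha * (outdeg vk)%:R * resid s vk / #|F i|%:R else 0))
    (fun w => if w == vk then 0
              else resid s w +
                   (if e w vk then (1 - alpha) * resid s vk / (outdeg w)%:R else 0)).

(* one iteration of the while loop: any vk with r(vk) > rmax may be chosen *)
Definition gbp_step (rmax : R) (s s' : gbp_state) : Prop :=
  exists vk, rmax < resid s vk /\ s' = gbp_push s vk.

(* GBP terminates from s: every sequence of (arbitrarily chosen) iterations is finite *)
Definition gbp_terminates (rmax : R) (s : gbp_state) : Prop :=
  Acc (fun s2 s1 => gbp_step rmax s1 s2) s.

(* s is a possible output state: reachable from the initial state, loop condition false *)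
Definition gbp_output (j : I) (rmax : R) (s : gbp_state) : Prop :=
  clos_refl_trans gbp_state (gbp_step rmax) (gbp_init j) s /\
  (forall v, resid s v <= rmax).

Definition avg_leaf_deg (i : I) : R :=
  (#|F i|%:R)^-1 * \sum_(vs in F i) (outdeg vs)%:R.

Definition gbp_rmax (eps delta : R) (j : I) : R :=
  eps * delta / \big[Num.max/0]_(i | i != j) avg_leaf_deg i.

End GBP.

From HB Require Import structures.
From mathcomp Require Import all_boot all_order all_algebra.
From mathcomp Require Import all_classical all_reals all_analysis.
From Stdlib Require Import Relation_Operators.
From mathcomp Require Import ring lra.
Import Order.TTheory GRing.Theory Num.Theory.
Import numFieldNormedType.Exports.
Local Open Scope ring_scope.

Set Implicit Arguments.
Unset Strict Implicit.

(* Write Q s u := sum_v r(v) pi(u,v) ([resid_ppr]).  By the backward equation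
   pi(u,v) = alpha [u = v] + (1-alpha) sum_{w -> v} pi(u,w) / d(w), a push at v_k
   lowers Q s u by alpha r(v_k) [u = v_k], so pihat(V_i) + avg_{u in F(V_i)} d(u) Q s u
   is a loop invariant, equal to pi_d(V_i,V_j) initially.  The error of the output
   is therefore that average, which lies in [0, r_max avg_{u in F(V_i)} d(u)]
   since pi(u,.) has total mass at most 1, and r_max is chosen to make this at
   most eps delta.  Termination: each push lowers sum_u Q s u >= 0 by
   alpha r(v_k) > alpha r_max. *)

Section RandomWalk.
Variables (R : realType) (V : finType) (e : rel V).
Hypothesis outdeg_pos : forall v : V, (0 < outdeg e v)%N.

Local Notation d v := ((outdeg e v)%:R : R).
Local Notation wp := (walkprob R e).

Lemma outdegR_gt0 v : 0 < d v.
Proof. by rewrite ltr0n. Qed.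

Lemma outdegR_neq0 v : d v != 0.
Proof. by rewrite gt_eqF ?outdegR_gt0. Qed.

Lemma sum_outnbr_const u (c : R) : \sum_(w | e u w) c = d u * c.
Proof.
rewrite (eq_bigl (fun w => w \in [set w | e u w])); last by move=> w; rewrite inE.
by rewrite sumr_const mulr_natl.
Qed.

Lemma walkprob_ge0 k u v : 0 <= wp k u v.
Proof.
elim: k u => [|k IH] u /=; first by rewrite ler0n.
by apply: sumr_ge0 => w _; rewrite divr_ge0 ?ler0n.
Qed.

Lemma walkprob_sum1 k u : \sum_v wp k u v = 1.
Proof.
elim: k u => [|k IH] u /=.
  by rewrite (bigD1 u) //= eqxx big1 ?addr0 // => v /negPf; rewrite eq_sym => ->.
rewrite exchange_big /=; under eq_bigr do rewrite -mulr_suml IH.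
by rewrite sum_outnbr_const mul1r mulfV ?outdegR_neq0.
Qed.

Lemma walkprob_addn a b u v : wp (a + b) u v = \sum_w wp a u w * wp b w v.
Proof.
elim: a u => [|a IH] u /=.
  rewrite add0n (bigD1 u) //= eqxx mul1r big1 ?addr0 // => w /negPf.
  by rewrite eq_sym => ->; rewrite mul0r.
under eq_bigr do rewrite IH mulr_suml.
rewrite exchange_big /=; apply: eq_bigr => w _.
by rewrite mulr_suml; apply: eq_bigr => x _; rewrite mulrAC.
Qed.

Lemma walkprob1 w v : wp 1 w v = (e w v)%:R / d w.
Proof.
rewrite /= -mulr_suml; congr (_ / _).
case E: (e w v).
  rewrite (bigD1 v) //= eqxx big1 ?addr0 // => x /andP[_ /negPf].
  by rewrite eq_sym => ->.
by rewrite big1 // => x Hx; case: eqP => // xv; rewrite xv E in Hx.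
Qed.

Lemma walkprobSr k u v : wp k.+1 u v = \sum_(w | e w v) wp k u w / d w.
Proof.
rewrite -addn1 walkprob_addn [RHS]big_mkcond; apply: eq_bigr => w _.
by rewrite walkprob1; case: (e w v); rewrite ?mul1r ?mul0r ?mulr0.
Qed.

End RandomWalk.

Section PersonalizedPageRank.
Variables (R : realType) (V : finType) (e : rel V) (alpha : R).
Hypothesis outdeg_pos : forall v : V, (0 < outdeg e v)%N.
Hypothesis alpha01 : 0 < alpha < 1.

Local Notation d v := ((outdeg e v)%:R : R).
Local Notation wp := (walkprob R e).
Local Notation ppr := (ppr e alpha).

Definition ppr_trunc n u v := \sum_(k < n) alpha * (1 - alpha) ^+ k * wp k u v.

Lemma stop_weight_ge0 k : 0 <= alpha * (1 - alpha) ^+ k.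
Proof.
by case/andP: alpha01 => a0 a1; rewrite mulr_ge0 ?exprn_ge0 ?subr_ge0 ?ltW.
Qed.

Lemma ppr_truncS n u v : ppr_trunc n.+1 u v =
  alpha * (u == v)%:R + (1 - alpha) * \sum_(w | e w v) ppr_trunc n u w / d w.
Proof.
rewrite /ppr_trunc big_ord_recl expr0 mulr1; congr (_ + _).
under [in RHS]eq_bigr do rewrite mulr_suml.
rewrite exchange_big mulr_sumr; apply: eq_bigr => k _.
rewrite (_ : (lift ord0 k : nat) = k.+1) // walkprobSr !mulr_sumr.
by apply: eq_bigr => w _; rewrite exprS; ring.
Qed.

Lemma ppr_trunc_ge0 n u v : 0 <= ppr_trunc n u v.
Proof. by apply: sumr_ge0 => k _; rewrite mulr_ge0 ?stop_weight_ge0 ?walkprob_ge0. Qed.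

Lemma ppr_trunc_sum n u : \sum_v ppr_trunc n u v = 1 - (1 - alpha) ^+ n.
Proof.
have geom m : \sum_(k < m) alpha * (1 - alpha) ^+ k = 1 - (1 - alpha) ^+ m.
  elim: m => [|m IH]; first by rewrite big_ord0 expr0 subrr.
  by rewrite big_ord_recr /= IH exprSr; ring.
rewrite /ppr_trunc exchange_big -geom; apply: eq_bigr => k _.
by rewrite -mulr_sumr walkprob_sum1 // mulr1.
Qed.

Lemma ppr_trunc_sum_le1 n u : \sum_v ppr_trunc n u v <= 1.
Proof.
case/andP: alpha01 => _ a1.
by rewrite ppr_trunc_sum lerBlDr lerDl exprn_ge0 // subr_ge0 ltW.
Qed.

Lemma ppr_trunc_le1 n u v : ppr_trunc n u v <= 1.
Proof.
apply: le_trans (ppr_trunc_sum_le1 n u).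
by rewrite (bigD1 v) //= lerDl; apply: sumr_ge0 => w _; apply: ppr_trunc_ge0.
Qed.

Lemma ppr_trunc_nondecreasing u v : nondecreasing_seq (fun n => ppr_trunc n u v).
Proof.
apply/nondecreasing_seqP => n.
by rewrite /ppr_trunc big_ord_recr /= lerDl mulr_ge0 ?stop_weight_ge0 ?walkprob_ge0.
Qed.

Lemma ppr_trunc_cvg u v : (ppr_trunc n u v @[n --> \oo] --> ppr u v)%classic.
Proof.
apply: nondecreasing_is_cvgn; first exact: ppr_trunc_nondecreasing.
by exists 1 => _ [n _ <-]; apply: ppr_trunc_le1.
Qed.

Lemma ppr_ge0 u v : 0 <= ppr u v.
Proof.
apply: limr_ge; first exact: ppr_trunc_cvg.
by near=> n; apply: ppr_trunc_ge0.
Unshelve. all: end_near.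
Qed.

Lemma ppr_sum_le1 u : \sum_v ppr u v <= 1.
Proof.
have sum_cvg : ((\sum_v ppr_trunc n u v) @[n --> \oo] --> \sum_v ppr u v)%classic.
  by apply: cvg_big => [|v _]; [exact: add_continuous | exact: ppr_trunc_cvg].
rewrite -(cvg_lim _ sum_cvg) //; apply: limr_le; first exact: cvgP sum_cvg.
by near=> n; apply: ppr_trunc_sum_le1.
Unshelve. all: end_near.
Qed.

Lemma ppr_last_step u v :
  ppr u v = alpha * (u == v)%:R + (1 - alpha) * \sum_(w | e w v) ppr u w / d w.
Proof.
have cvgS : (ppr_trunc n.+1 u v @[n --> \oo] --> ppr u v)%classic.
  by rewrite (cvg_shiftS (fun n => ppr_trunc n u v)); apply: ppr_trunc_cvg.
apply: norm_cvg_unique cvgS _.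
have -> : (fun n => ppr_trunc n.+1 u v) = fun n =>
    alpha * (u == v)%:R + (1 - alpha) * \sum_(w | e w v) ppr_trunc n u w / d w.
  by apply: funext => n; rewrite ppr_truncS.
apply: cvgD; first exact: cvg_cst.
apply: cvgMl_tmp; apply: cvg_big => [|w _]; first exact: add_continuous.
by apply: cvgMr_tmp; apply: ppr_trunc_cvg.
Qed.

End PersonalizedPageRank.

Section BackwardPush.
Variables (R : realType) (V : finType) (e : rel V) (alpha : R).
Variables (I : finType) (F : I -> {set V}).
Hypothesis no_loop : forall v : V, ~~ e v v.
Hypothesis outdeg_pos : forall v : V, (0 < outdeg e v)%N.
Hypothesis alpha01 : 0 < alpha < 1.

Local Notation d v := ((outdeg e v)%:R : R).
Local Notation ppr := (ppr e alpha).
Local Notation state := (gbp_state R V I).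
Local Notation push := (gbp_push e alpha F).
Local Notation step := (gbp_step e alpha F).

Definition resid_ppr (s : state) u := \sum_v resid s v * ppr u v.

Definition resid_potential (s : state) := \sum_u resid_ppr s u.

Definition push_invariant (s : state) i :=
  pihat s i + (#|F i|%:R)^-1 * \sum_(u in F i) d u * resid_ppr s u.

Definition resid_nonneg (s : state) := forall v, 0 <= resid s v.

Lemma resid_push s vk w : resid (push s vk) w =
  resid s w - (if w == vk then resid s vk else 0) +
  (if e w vk then (1 - alpha) * resid s vk / d w else 0).
Proof.
rewrite /=; case: eqP => [->|_]; last by rewrite subr0.
by rewrite (negbTE (no_loop vk)) subrr addr0.
Qed.

Lemma resid_ppr_push s vk u :
  resid_ppr (push s vk) u = resid_ppr s u - alpha * (u == vk)%:R * resid s vk.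
Proof.
rewrite /resid_ppr; under eq_bigr do rewrite resid_push.
rewrite (eq_bigr (fun v => resid s v * ppr u v -
   (if v == vk then resid s vk * ppr u vk else 0) +
   (if e v vk then (1 - alpha) * resid s vk / d v * ppr u v else 0))); last first.
  move=> v _; rewrite mulrDl mulrBl; case: eqP => [->|_];
    [rewrite (negbTE (no_loop vk)) | case: (e v vk)]; by rewrite ?mul0r ?subr0 ?addr0.
rewrite big_split /= sumrB -big_mkcond big_pred1_eq -big_mkcond /=.
have -> : \sum_(v | e v vk) (1 - alpha) * resid s vk / d v * ppr u v =
    resid s vk * ((1 - alpha) * \sum_(w | e w vk) ppr u w / d w).
  by rewrite !mulr_sumr; apply: eq_bigr => v _; ring.
by rewrite (ppr_last_step outdeg_pos alpha01 u vk); ring.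
Qed.

Lemma resid_potential_push s vk :
  resid_potential (push s vk) = resid_potential s - alpha * resid s vk.
Proof.
rewrite /resid_potential; under eq_bigr do rewrite resid_ppr_push.
rewrite sumrB; congr (_ - _).
rewrite (bigD1 vk) //= eqxx mulr1 big1 ?addr0 // => u /negPf ->.
by rewrite mulr0 mul0r.
Qed.

Lemma push_invariant_push s vk i : push_invariant (push s vk) i = push_invariant s i.
Proof.
rewrite /push_invariant /=; under eq_bigr do rewrite resid_ppr_push mulrBr.
rewrite sumrB.
have -> : \sum_(u in F i) d u * (alpha * (u == vk)%:R * resid s vk) =
    (vk \in F i)%:R * (d vk * (alpha * resid s vk)).
  rewrite big_mkcond (bigD1 vk) //= big1 ?addr0; last first.
    by move=> u /negPf uvk; rewrite uvk mulr0 mul0r mulr0; case: ifP.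
  by case: ifP => _; rewrite ?eqxx ?mulr1 ?mul1r ?mul0r.
by case: (vk \in F i) => /=; ring.
Qed.

Lemma push_invariant_init j i : push_invariant (gbp_init R F j) i = pprd_super e alpha F i j.
Proof.
rewrite /push_invariant /pprd_super /= add0r invfM -mulrA; congr (_ * _).
rewrite mulr_sumr; apply: eq_bigr => u _.
rewrite /resid_ppr mulr_sumr [RHS]mulr_sumr [RHS]big_mkcond; apply: eq_bigr => v _.
by rewrite /pprd /=; case: ifP => _; [ring | rewrite !mul0r mulr0].
Qed.

Lemma resid_nonneg_init j : resid_nonneg (gbp_init R F j).
Proof. by move=> v /=; case: ifP => _ //; rewrite invr_ge0 ler0n. Qed.

Lemma resid_nonneg_push s vk : resid_nonneg s -> resid_nonneg (push s vk).
Proof.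
case/andP: alpha01 => _ a1 s_ge0 w /=; case: eqP => // _.
apply: addr_ge0 => //; case: ifP => // _.
by rewrite divr_ge0 ?ler0n // mulr_ge0 // subr_ge0 ltW.
Qed.

Lemma resid_ppr_ge0 s u : resid_nonneg s -> 0 <= resid_ppr s u.
Proof.
by move=> s_ge0; apply: sumr_ge0 => v _; rewrite mulr_ge0 ?(ppr_ge0 outdeg_pos).
Qed.

Lemma resid_potential_ge0 s : resid_nonneg s -> 0 <= resid_potential s.
Proof. by move=> s_ge0; apply: sumr_ge0 => u _; apply: resid_ppr_ge0. Qed.

Lemma resid_ppr_le s u m : 0 <= m ->
  resid_nonneg s -> (forall v, resid s v <= m) -> resid_ppr s u <= m.
Proof.
move=> m_ge0 s_ge0 s_le.
apply: (le_trans (y := \sum_v m * ppr u v)).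
  by apply: ler_sum => v _; rewrite ler_wpM2r ?(ppr_ge0 outdeg_pos).
rewrite -mulr_sumr -[X in _ <= X]mulr1 ler_wpM2l //.
exact: ppr_sum_le1.
Qed.

Lemma gbp_reach_invariant rmax j s :
  clos_refl_trans state (step rmax) (gbp_init R F j) s ->
  resid_nonneg s /\ forall i, push_invariant s i = pprd_super e alpha F i j.
Proof.
move=> reach; suff : forall x y, clos_refl_trans state (step rmax) x y ->
    resid_nonneg x /\ (forall i, push_invariant x i = pprd_super e alpha F i j) ->
    resid_nonneg y /\ (forall i, push_invariant y i = pprd_super e alpha F i j).
  by apply; [exact: reach | split; [exact: resid_nonneg_init | exact: push_invariant_init]].
move=> x y; elim=> {x y} // [x y [vk [_ ->]] [x_ge0 x_inv] | x y z _ IHxy _ IHyz /IHxy/IHyz //].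
by split=> [|i]; [exact: resid_nonneg_push | rewrite push_invariant_push].
Qed.

Lemma gbp_output_error rmax j s i : 0 <= rmax ->
  gbp_output e alpha F j rmax s ->
  `|pihat s i - pprd_super e alpha F i j| <= rmax * avg_leaf_deg R e F i.
Proof.
move=> rmax_ge0 [reach s_le]; have [s_ge0 s_inv] := gbp_reach_invariant reach.
rewrite -(s_inv i) /push_invariant opprD addrA subrr add0r normrN ger0_norm; last first.
  rewrite mulr_ge0 ?invr_ge0 ?ler0n //; apply: sumr_ge0 => u _.
  by rewrite mulr_ge0 ?ler0n ?resid_ppr_ge0.
rewrite /avg_leaf_deg mulrCA ler_wpM2l ?invr_ge0 ?ler0n // mulr_sumr.
by apply: ler_sum => u _; rewrite mulrC ler_wpM2r ?ler0n ?resid_ppr_le.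
Qed.

Lemma gbp_acc rmax s : 0 < rmax -> resid_nonneg s ->
  Acc (fun s2 s1 => step rmax s1 s2) s.
Proof.
case/andP: alpha01 => a0 _ rmax_gt0 s_ge0.
have c_gt0 : 0 < alpha * rmax by rewrite mulr_gt0.
suff acc : forall N s, resid_nonneg s -> resid_potential s < N%:R * (alpha * rmax) ->
    Acc (fun s2 s1 => step rmax s1 s2) s.
  apply: (acc (Num.Def.archi_bound (resid_potential s / (alpha * rmax)))) => //.
  rewrite -ltr_pdivrMr //; apply: archi_boundP.
  by rewrite divr_ge0 ?resid_potential_ge0 ?ltW.
move=> {s s_ge0} N; elim: N => [|N IH] s s_ge0 pot_lt.
  by move: pot_lt; rewrite mul0r ltNge resid_potential_ge0.
constructor=> _ [vk [rmax_lt ->]].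
apply: IH; first exact: resid_nonneg_push.
have : alpha * rmax < alpha * resid s vk by rewrite ltr_pM2l.
move: pot_lt; rewrite resid_potential_push -natr1 mulrDl mul1r; lra.
Qed.

End BackwardPush.

Lemma eps_delta_approx_of_abs_le (R : realType) (eps delta xhat x : R) :
  0 <= eps -> `|xhat - x| <= eps * delta -> eps_delta_approx eps delta xhat x.
Proof.
move=> eps_ge0 err_le; split=> // delta_le.
exact: le_trans err_le (ler_wpM2l eps_ge0 delta_le).
Qed.

Section Threshold.
Variables (R : realType) (V : finType) (e : rel V) (I : finType) (F : I -> {set V}).
Hypothesis outdeg_pos : forall v : V, (0 < outdeg e v)%N.
Hypothesis leaves_nonempty : forall i : I, F i != finset.set0.

Local Notation avg i := (avg_leaf_deg R e F i).

Lemma avg_leaf_deg_gt0 i : 0 < avg i.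
Proof.
have [v v_in] := set0Pn _ (leaves_nonempty i).
rewrite mulr_gt0 ?invr_gt0 ?ltr0n ?card_gt0 ?leaves_nonempty //.
rewrite (bigD1 v) //=; apply: lt_le_trans (outdegR_gt0 R outdeg_pos v) _.
by rewrite lerDl sumr_ge0 // => w _; rewrite ler0n.
Qed.

Lemma max_avg_leaf_deg_gt0 j : (2 <= #|I|)%N ->
  0 < \big[Num.max/0]_(i | i != j) avg i.
Proof.
move=> I2; have [i ij] : exists i, i != j.
  have [x [y [_ _ xy]]] := card_gt1P I2.
  by case: (eqVneq x j) => [xj|]; [exists y; rewrite -xj eq_sym | exists x].
exact: lt_le_trans (avg_leaf_deg_gt0 i) (le_bigmax_cond 0 (P := fun i => i != j) (avg_leaf_deg R e F) ij).
Qed.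

Lemma gbp_rmax_gt0 (eps delta : R) j : (2 <= #|I|)%N -> 0 < eps -> 0 < delta ->
  0 < gbp_rmax e F eps delta j.
Proof.
by move=> I2 eps_gt0 delta_gt0; rewrite divr_gt0 ?mulr_gt0 ?max_avg_leaf_deg_gt0.
Qed.

Lemma gbp_rmax_avg_le (eps delta : R) j i : (2 <= #|I|)%N -> 0 <= eps * delta -> i != j ->
  gbp_rmax e F eps delta j * avg i <= eps * delta.
Proof.
move=> I2 ed_ge0 ij; rewrite mulrAC ler_pdivrMr ?max_avg_leaf_deg_gt0 //.
by rewrite ler_wpM2l // (le_bigmax_cond 0 (P := fun i => i != j) (avg_leaf_deg R e F) ij).
Qed.

End Threshold.

Theorem lemma3 (R : realType) (V : finType) (e : rel V) (alpha : R)
    (I : finType) (F : I -> {set V}) (eps delta : R) (j : I) :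
  (forall v : V, ~~ e v v) ->
  (forall v : V, (0 < outdeg e v)%N) ->
  0 < alpha < 1 ->
  (forall i : I, F i != finset.set0) ->
  (forall i1 i2 : I, i1 != i2 -> [disjoint F i1 & F i2]) ->
  (2 <= #|I|)%N ->
  0 < eps -> 0 < delta ->
  gbp_terminates e alpha F (gbp_rmax e F eps delta j) (gbp_init R F j) /\
  (forall s, gbp_output e alpha F j (gbp_rmax e F eps delta j) s ->
     forall i : I, i != j ->
       eps_delta_approx eps delta (pihat s i) (pprd_super e alpha F i j)).
Proof.
move=> no_loop outdeg_pos alpha01 leaves_nonempty _ I2 eps_gt0 delta_gt0.
have rmax_gt0 := gbp_rmax_gt0 outdeg_pos leaves_nonempty j I2 eps_gt0 delta_gt0.
split; first exact: (gbp_acc F no_loop outdeg_pos alpha01 rmax_gt0 (resid_nonneg_init R F j)).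
move=> s s_out i ij; apply: eps_delta_approx_of_abs_le; first exact: ltW.
apply: le_trans (gbp_output_error no_loop outdeg_pos alpha01 i (ltW rmax_gt0) s_out) _.
by apply: gbp_rmax_avg_le; rewrite ?mulr_ge0 ?ltW.
Qed.
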